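(* Let $\varepsilon\geq 0$, $\delta\in[0,1]$ and $k\ge 1$ an integer. The class of $(\varepsilon,\delta)$-differentially private mechanisms satisfies $\big((k-2i)\varepsilon,\;1-(1-\delta)^k(1-\delta_i)\big)$-differential privacy under $k$-fold adaptive composition, for every $i\in\{0,1,\ldots,\lfloor k/2\rfloor\}$, where $$\delta_i=\frac{\sum_{\ell=0}^{i-1}\binom{k}{\ell}\big(e^{(k-\ell)\varepsilon}-e^{(k-2i+\ell)\varepsilon}\big)}{(1+e^{\varepsilon})^k}.$$
   Context: Databases carry a symmetric neighbor relation $\sim$. A randomized mechanism $M$ (taking a database and a query to a random output) is $(\varepsilon,\delta)$-differentially private if for all $D\sim D'$ (and any query) and all measurable output sets $S$, $\mathbb P(M(D)\in S)\le e^{\varepsilon}\mathbb P(M(D')\in S)+\delta$. $k$-fold adaptive composition experiment with a class $\mathcal M$ of mechanisms and a bit $b\in\{0,1\}$ unknown to the adversary: an adversary $\mathcal A$ with internal randomness $R$, at each step $i=1,\dots,k$, chooses (as a function of $R$ and the previous outputs $y_1,\dots,y_{i-1}$) neighboring databases $D^{i,0}\sim D^{i,1}$, a query $q_i$ and a mechanism $M_i\in\mathcal M$, and receives $y_i=M_i(D^{i,b},q_i)$; the internal randomness of the mechanisms is independent across steps and of $R$. The view is $V^b=(R,Y_1^b,\dots,Y_k^b)$. The class $\mathcal M$ satisfies $(\varepsilon',\delta')$-differential privacy under $k$-fold adaptive composition if for every adversary and every measurable set $S$ of views, $\mathbb P(V^0\in S)\le e^{\varepsilon'}\mathbb P(V^1\in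 S)+\delta'$ and $\mathbb P(V^1\in S)\le e^{\varepsilon'}\mathbb P(V^0\in S)+\delta'$. *)

From HB Require Import structures.
From mathcomp Require Import all_boot all_order all_algebra.
From mathcomp Require Import all_classical all_reals all_analysis measurable_realfun.
Set Implicit Arguments. Unset Strict Implicit. Unset Printing Implicit Defensive.
Import Order.TTheory GRing.Theory Num.Theory.
Local Open Scope classical_set_scope.
Local Open Scope ring_scope.

Section DP.
Context {R : realType} {DB Q : Type} {dY : measure_display} {Y : measurableType dY}.

Definition mechanism := DB -> Q -> probability Y R.

Definition is_DP (nbr : DB -> DB -> Prop) (eps delta : R) (M : mechanism) : Prop :=
  forall (D D' : DB) (q : Q), nbr D D' ->
  forall S : set Y, measurable S ->
    (M D q S <= (expR eps)%:E * M D' q S + delta%:E)%E.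

Record step_choice := StepChoice {
  ch_D0 : DB; ch_D1 : DB; ch_q : Q; ch_M : mechanism }.

Definition step_law (c : step_choice) (b : bool) : probability Y R :=
  ch_M c (if b then ch_D1 c else ch_D0 c) (ch_q c).

Section Adversary.
Context {dO : measure_display} {Omega : measurableType dO}.

(* An adversary: at step i (0-based), given its internal randomness r and the
   previous outputs ys = [:: y_1; ...; y_i], it picks a step_choice. *)
Definition adversary := nat -> Omega -> seq Y -> step_choice.

(* Well-formedness w.r.t. the class of (eps,delta)-DP mechanisms and k steps:
   neighbouring databases, mechanism in the class, and (so that the view is a
   well-defined random variable) the transition kernels are measurable in the
   history (r, y_1, ..., y_i). *)
Definition valid_adversary (nbr : DB -> DB -> Prop) (eps delta : R) (k : nat)
    (A : adversary) : Prop :=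
  forall (i : nat), (i < k)%N ->
  (forall (r : Omega) (ys : i.-tuple Y),
     nbr (ch_D0 (A i r ys)) (ch_D1 (A i r ys)) /\
     is_DP nbr eps delta (ch_M (A i r ys))) /\
  (forall (b : bool) (B : set Y), measurable B ->
     measurable_fun [set: Omega * i.-tuple Y]
       (fun p : Omega * i.-tuple Y => (step_law (A i p.1 p.2) b B : \bar R))).

(* Iterated integral over the remaining m steps (finite Ionescu-Tulcea):
   given r and the outputs ys produced so far, integrate f over the
   subsequent outputs, each drawn from the kernel chosen by the adversary. *)
Fixpoint view_int (A : adversary) (b : bool) (m : nat) (r : Omega) (ys : seq Y)
    (f : Omega -> seq Y -> \bar R) {struct m} : \bar R :=
  match m with
  | 0 => f r ys
  | m'.+1 => (\int[step_law (A (size ys) r ys) b]_y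
                view_int A b m' r (rcons ys y) f)%E
  end.

(* P(V^b \in S) for a set S of views (r, y_1, ..., y_k). *)
Definition view_prob (PR : probability Omega R) (A : adversary) (b : bool)
    (k : nat) (S : set (Omega * k.-tuple Y)) : \bar R :=
  (\int[PR]_r view_int A b k r [::]
     (fun r' ys => match insub ys : option (k.-tuple Y) with
                   | Some t => (\1_S (r', t) : R)%:E
                   | None => 0
                   end))%E.

End Adversary.

Definition DP_under_composition (nbr : DB -> DB -> Prop) (eps delta : R)
    (k : nat) (eps' delta' : R) : Prop :=
  forall (dO : measure_display) (Omega : measurableType dO)
         (PR : probability Omega R) (A : @adversary _ Omega),
  valid_adversary nbr eps delta k A ->
  forall S : set (Omega * k.-tuple Y), measurable S ->
    (view_prob PR A false S <= (expR eps')%:E * view_prob PR A true S + delta'%:E)%E /\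
    (view_prob PR A true S <= (expR eps')%:E * view_prob PR A false S + delta'%:E)%E.

End DP.

Definition delta_i {R : realType} (eps : R) (k i : nat) : R :=
  (\sum_(l < i) 'C(k, l)%:R *
      (expR ((k%:R - l%:R) * eps) - expR ((k%:R - 2 * i%:R + l%:R) * eps)))
  / (1 + expR eps) ^+ k.

(* For fixed coins of the adversary, let a and b be the probabilities of a set
   of views under the two values of the secret bit.  The pairs (a, b) and
   (b, a) lie in the privacy region of the k-fold composition of the extremal
   (eps, delta)-mechanism, which reveals the bit with probability delta and
   otherwise answers by randomized response.  This region is described by its
   support function in the directions u >= 0 >= v, which satisfies a simple
   recursion in the number of steps.  One adaptive step preserves membership:
   writing both output laws with densities against their sum, the step bound
   integrates a pointwise inequality between hinge functions of the densities.
   Unfolding the recursion yields a binomial sum of hinge functions whose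
   value at (1, -e^((k-2i) eps)) is exactly 1 - (1-delta)^k (1 - delta_i);
   integrating over the coins concludes. *)

From HB Require Import structures.
From mathcomp Require Import all_boot all_order all_algebra.
From mathcomp Require Import all_classical all_reals all_analysis measurable_realfun.
From mathcomp Require Import ring lra zify.
Import Order.TTheory GRing.Theory Num.Theory.
Local Open Scope classical_set_scope.
Local Open Scope ring_scope.

Lemma maxr0_cases {R : realDomainType} (a : R) :
  (Num.max a 0 = a /\ 0 <= a) \/ (Num.max a 0 = 0 /\ a <= 0).
Proof. by have [h|h] := leP a 0; [right | left; split=> //; exact: ltW]. Qed.

Section BinomialHinge.
Context {R : realFieldType} (x : R).

Definition binomial_hinge m u v := \sum_(0 <= j < m.+1)
  'C(m, j)%:R * Num.max (u * x ^+ (m - j) + v * x ^+ j) 0.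

Lemma binomial_hingeS m u v :
  binomial_hinge m.+1 u v = binomial_hinge m (x * u) v + binomial_hinge m u (x * v).
Proof.
pose T j := Num.max (u * x ^+ (m.+1 - j) + v * x ^+ j) 0.
have -> : binomial_hinge m (x * u) v = \sum_(0 <= j < m.+1) 'C(m, j)%:R * T j.
  apply: eq_big_nat => j /andP[_ lt_jm]; congr (_ * Num.max (_ + _) 0).
  by rewrite subSn // exprS; ring.
have -> : binomial_hinge m u (x * v) = \sum_(0 <= j < m.+1) 'C(m, j)%:R * T j.+1.
  by apply: eq_big_nat => j _; rewrite /T subSS exprS; congr (_ * Num.max (_ + _) 0); ring.
have -> : binomial_hinge m.+1 u v = T 0%N +
    \sum_(0 <= j < m.+1) 'C(m, j.+1)%:R * T j.+1 +
    \sum_(0 <= j < m.+1) 'C(m, j)%:R * T j.+1.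
  rewrite /binomial_hinge big_nat_recl // -addrA -big_split /= bin0 mul1r.
  by congr (_ + _); apply: eq_big_nat => j _; rewrite binS natrD mulrDl.
rewrite [X in _ = X + _]big_nat_recl //= bin0 mul1r; congr (_ + _ + _).
by rewrite big_nat_recr //= bin_small // mul0r addr0.
Qed.

Lemma binomial_hinge_threshold k i : 1 <= x -> (2 * i <= k)%N ->
  binomial_hinge k 1 (- x ^+ (k - 2 * i)) =
  \sum_(0 <= l < i) 'C(k, l)%:R * (x ^+ (k - l) - x ^+ (k - 2 * i + l)).
Proof.
move=> x_ge1 le_2ik; rewrite /binomial_hinge (@big_cat_nat _ _ _ i) //=; last by lia.
rewrite [X in _ + X]big1_seq ?addr0; last first.
  move=> j /andP[_]; rewrite mem_index_iota => /andP[le_ij lt_jk].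
  rewrite max_r ?mulr0 // mul1r mulNr -exprD subr_le0.
  by apply: ler_weXn2l => //; lia.
apply: eq_big_nat => j /andP[_ lt_ji].
rewrite max_l ?mul1r mulNr -exprD // subr_ge0.
by apply: ler_weXn2l => //; lia.
Qed.

End BinomialHinge.

Section CompositionSupport.
Context {R : realFieldType} {x dl : R}.
Hypotheses (x_ge1 : 1 <= x) (dl_ge0 : 0 <= dl) (dl_le1 : dl <= 1).

(* comp_support m u v is the support function, in the directions u >= 0 >= v,
   of the privacy region of the m-fold composition of the extremal
   (ln x, dl)-mechanism: with probability dl it reveals the bit, otherwise it
   answers by randomized response with odds x : 1. *)
Fixpoint comp_support (m : nat) (u v : R) : R :=
  match m with
  | 0%N => Num.max (u + v) 0
  | m'.+1 => dl * u + (1 - dl) / (1 + x) *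
               (comp_support m' (x * u) v + comp_support m' u (x * v))
  end.

Let x_ge0 : 0 <= x. Proof. by move: x_ge1; lra. Qed.

Let rr_weight_ge0 : 0 <= (1 - dl) / (1 + x).
Proof. by apply: divr_ge0; move: x_ge1 dl_le1; lra. Qed.

Let rr_weightK : (1 - dl) / (1 + x) * (1 + x) = 1 - dl.
Proof. by rewrite divfK // gt_eqF //; move: x_ge1; lra. Qed.

Lemma comp_supportZ m c u v :
  0 <= c -> comp_support m (c * u) (c * v) = c * comp_support m u v.
Proof.
move=> c_ge0; elim: m u v => [|m IH] u v /=.
  by rewrite -mulrDr -[X in Num.max _ X](mulr0 c) maxr_pMr.
by rewrite (mulrCA x c u) (mulrCA x c v) !IH; ring.
Qed.

Lemma le_comp_support_r m u v v' :
  v' <= v -> comp_support m u v' <= comp_support m u v.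
Proof.
elim: m u v v' => [|m IH] u v v' le_v /=.
  by apply: le_max2 => //; rewrite lerD2l.
rewrite lerD2l ler_wpM2l // lerD //; first exact: IH.
by apply: IH; rewrite ler_wpM2l.
Qed.

Lemma comp_support_lipl m u u' v :
  u <= u' -> comp_support m u' v - comp_support m u v <= u' - u.
Proof.
elim: m u u' v => [|m IH] u u' v le_u /=.
  by case: (maxr0_cases (u' + v)) => -[-> ?];
     case: (maxr0_cases (u + v)) => -[-> ?]; lra.
have := IH (x * u) (x * u') v (ler_wpM2l x_ge0 le_u).
have := IH u u' (x * v) le_u.
have := rr_weight_ge0; have := rr_weightK.
set c := (1 - dl) / (1 + x) => cK c_ge0 h2 h1.
have h : c * (comp_support m (x * u') v - comp_support m (x * u) v +
             (comp_support m u' (x * v) - comp_support m u (x * v)))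
         <= (1 - dl) * (u' - u).
  rewrite -cK (_ : c * (1 + x) * (u' - u) = c * (x * u' - x * u + (u' - u)));
    last by ring.
  by apply: ler_wpM2l => //; exact: lerD.
nra.
Qed.

Lemma comp_support_ge0 m u v : 0 <= u -> 0 <= comp_support m u v.
Proof.
elim: m u v => [|m IH] u v u_ge0 /=; first by rewrite le_max lexx orbT.
apply: addr_ge0; first exact: mulr_ge0.
by apply: mulr_ge0 => //; apply: addr_ge0; apply: IH => //; exact: mulr_ge0.
Qed.

Lemma comp_support0l m v : v <= 0 -> comp_support m 0 v = 0.
Proof.
elim: m v => [|m IH] v v_le0 /=; first by rewrite add0r; apply/max_idPr.
by rewrite !mulr0 !IH ?mulr_ge0_le0 // addr0 mulr0 add0r.
Qed.

Lemma comp_support_lel m u v : 0 <= u -> v <= 0 -> comp_support m u v <= u.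
Proof.
by move=> u_ge0 v_le0; have := @comp_support_lipl m 0 u v u_ge0; rewrite comp_support0l //; lra.
Qed.

(* la and mu solve the 2 x 2 system of determinant x^2 - 1; when x = 1 take
   la := comp_support m u v and mu := 0. *)
Lemma comp_support_decomp m u v : 0 <= u -> v <= 0 -> exists la mu,
  [/\ x * la + mu = comp_support m (x * u) v,
      la + x * mu = comp_support m u (x * v), la <= u, mu <= 0 & 0 <= la].
Proof.
move=> u_ge0 v_le0.
have [->|x_neq1] := eqVneq x 1.
  exists (comp_support m u v), 0; rewrite !mul1r addr0.
  by split; rewrite ?comp_support_lel ?comp_support_ge0.
have x_gt1 : 1 < x by rewrite lt_neqAle eq_sym x_neq1 x_ge1.
have x2_gt1 : 0 < x * x - 1 by nra.
set C1 := comp_support m (x * u) v; set C2 := comp_support m u (x * v).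
have C1_ge0 : 0 <= C1 by rewrite comp_support_ge0 ?mulr_ge0.
have C2_ge0 : 0 <= C2 by rewrite comp_support_ge0.
have le_xC2 : x * C2 <= C1.
  rewrite /C2 -comp_supportZ //; apply: le_comp_support_r; rewrite mulrA; nra.
have le_xC1 : x * C1 - C2 <= (x * x - 1) * u.
  rewrite /C1 -comp_supportZ // mulrA.
  have : u <= x * x * u by nra.
  by move/(@comp_support_lipl m _ _ (x * v)); rewrite /C2; lra.
exists ((x * C1 - C2) / (x * x - 1)), ((x * C2 - C1) / (x * x - 1)).
have x2_neq0 : x * x - 1 != 0 by rewrite gt_eqF.
split; [by field | by field | | |].
- by rewrite ler_pdivrMr //; lra.
- by rewrite ler_pdivrMr // mul0r; lra.
- by rewrite divr_ge0 //; [nra | exact: ltW].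
Qed.

Lemma comp_support_binomial m u v :
  comp_support m u v * (1 + x) ^+ m =
  (1 - (1 - dl) ^+ m) * u * (1 + x) ^+ m + (1 - dl) ^+ m * binomial_hinge x m u v.
Proof.
elim: m u v => [|m IH] u v.
  by rewrite /binomial_hinge big_nat1 /= !expr0 !mulr1 subrr bin0 mul0r add0r !mul1r.
rewrite binomial_hingeS /= exprS.
set c := (1 - dl) / (1 + x).
set S1 := comp_support m (x * u) v; set S2 := comp_support m u (x * v).
transitivity (dl * u * ((1 + x) * (1 + x) ^+ m) +
  (c * (1 + x)) * (S1 * (1 + x) ^+ m + S2 * (1 + x) ^+ m)); first by ring.
by rewrite rr_weightK /S1 /S2 !IH !exprS; ring.
Qed.

End CompositionSupport.

Arguments comp_support {R} x dl m u v.

(* Pointwise form of the one-step bound: p, q are the densities of the two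
   output laws and g0, g1 the continuation values.  The three cases are the
   regions p >= x q, q >= x p and the band between them. *)
Lemma dp_step_pointwise {R : realFieldType} {x u v C1 C2 la mu p q g0 g1 : R} :
  1 <= x -> 0 <= u -> v <= 0 -> 0 <= p -> 0 <= q ->
  0 <= g0 <= 1 -> 0 <= g1 <= 1 ->
  x * u * g0 + v * g1 <= C1 -> u * g0 + x * v * g1 <= C2 ->
  x * la + mu = C1 -> la + x * mu = C2 -> la <= u -> mu <= 0 ->
  u * g0 * p + v * g1 * q <=
  (u - la) * Num.max (p - x * q) 0 + (- mu) * Num.max (q - x * p) 0
  + la * p + mu * q.
Proof.
move=> x_ge1 u_ge0 v_le0 p_ge0 q_ge0 /andP[g0_ge0 g0_le1] /andP[g1_ge0 g1_le1]
  le_C1 le_C2 eC1 eC2 le_la mu_le0.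
have [le_xq_p|lt_p_xq] := leP (x * q) p.
  rewrite max_l ?subr_ge0 // (_ : Num.max (q - x * p) 0 = 0); last first.
    by apply/max_idPr; rewrite subr_le0; nra.
  have : 0 <= (u - u * g0) * (p - x * q) by apply: mulr_ge0; nra.
  have : 0 <= q * (C1 - (x * u * g0 + v * g1)) by apply: mulr_ge0; lra.
  by rewrite -eC1 => h2 h1; nra.
have [le_xp_q|lt_q_xp] := leP (x * p) q.
  rewrite max_r ?subr_le0 ?(ltW lt_p_xq) // max_l ?subr_ge0 //.
  have : 0 <= (- v * g1) * (q - x * p) by apply: mulr_ge0; nra.
  have : 0 <= p * (C2 - (u * g0 + x * v * g1)) by apply: mulr_ge0; lra.
  by rewrite -eC2 => h2 h1; nra.
rewrite !max_r ?subr_le0 ?(ltW lt_p_xq) ?(ltW lt_q_xp) // !mulr0 !add0r.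
have x2_gt0 : 0 < x * x - 1 by nra.
have : 0 <= (x * p - q) * (C1 - (x * u * g0 + v * g1)) by apply: mulr_ge0; lra.
have : 0 <= (x * q - p) * (C2 - (u * g0 + x * v * g1)) by apply: mulr_ge0; lra.
rewrite -eC1 -eC2 => h2 h1.
rewrite -(ler_pM2l x2_gt0); nra.
Qed.

Section IntegralLemmas.
Context d (T : measurableType d) (R : realType) (m : {measure set T -> \bar R}).

Lemma ge0_integral_comb2 (a b : R) (f g : T -> R) :
  0 <= a -> 0 <= b -> (forall y, 0 <= f y) -> (forall y, 0 <= g y) ->
  measurable_fun setT f -> measurable_fun setT g ->
  (\int[m]_y ((a * f y + b * g y)%:E) =
   a%:E * \int[m]_y (f y)%:E + b%:E * \int[m]_y (g y)%:E)%E.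
Proof.
move=> a_ge0 b_ge0 f_ge0 g_ge0 mf mg.
under eq_integral do rewrite EFinD !EFinM.
rewrite ge0_integralD //=.
- rewrite ge0_integralZl_EFin //; last exact/measurable_EFinP.
  rewrite ge0_integralZl_EFin //; last exact/measurable_EFinP.
  by move=> y _; rewrite lee_fin.
  by move=> y _; rewrite lee_fin.
- by move=> y _; rewrite -EFinM lee_fin mulr_ge0.
- exact/measurable_EFinP/measurable_funM.
- by move=> y _; rewrite -EFinM lee_fin mulr_ge0.
- exact/measurable_EFinP/measurable_funM.
Qed.

(* Integrating the positive part of a - x b over the set where it is positive
   turns the hypothesis on that set into the bound. *)
Lemma integral_excess_le (a b : T -> R) (x dl : R) : 0 <= x ->
  (forall y, 0 <= a y) -> (forall y, 0 <= b y) ->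
  measurable_fun setT a -> measurable_fun setT b ->
  (forall S, measurable S -> (\int[m]_(y in S) (b y)%:E)%E \is a fin_num) ->
  (forall S, measurable S -> (\int[m]_(y in S) (a y)%:E <=
       x%:E * \int[m]_(y in S) (b y)%:E + dl%:E)%E) ->
  (\int[m]_y (Num.max (a y - x * b y) 0)%:E <= dl%:E)%E.
Proof.
move=> x_ge0 a_ge0 b_ge0 ma mb b_fin le_ab.
set h := fun y => a y - x * b y.
have mh : measurable_fun setT h.
  by apply: measurable_funB => //; exact: measurable_funM.
set B := [set y | 0 < h y].
have mB : measurable B.
  have := mh measurableT _ (measurable_itv `]0, +oo[); rewrite setTI.
  by congr measurable; apply/seteqP; split => y /=; rewrite in_itv /= andbT.
have mhp : measurable_fun setT (fun y => (Num.max (h y) 0)%:E).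
  by apply/measurable_EFinP; apply: measurable_maxr.
have mCB : measurable (~` B) by exact: measurableC.
rewrite -(setUv B) ge0_integral_setU //; last 3 first.
- by rewrite setUv.
- by move=> y _; rewrite lee_fin le_max lexx orbT.
- by rewrite disj_set2E setICr.
rewrite [X in (_ + X)%E]integral0_eq ?adde0 //; last first.
  by move=> y /= hy; congr EFin; apply/max_idPr; rewrite leNgt; exact/negP.
have e1 : (\int[m]_(y in B) (Num.max (h y) 0)%:E +
    x%:E * \int[m]_(y in B) (b y)%:E = \int[m]_(y in B) (a y)%:E)%E.
  rewrite -ge0_integralZl_EFin //; last 2 first.
  - by move=> y _; rewrite lee_fin.
  - exact/measurable_EFinP/measurable_funTS.
  rewrite -ge0_integralD //; last 4 first.
  - by move=> y _; rewrite lee_fin le_max lexx orbT.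
  - exact: measurable_funTS.
  - by move=> y _; rewrite lee_fin mulr_ge0.
  - exact/measurable_EFinP/measurable_funTS/measurable_funM.
  apply: eq_integral => y /[!inE] /= hy; rewrite max_l; last exact: ltW.
  by rewrite /h -EFinD subrK.
by have := le_ab B mB; rewrite -e1 addeC leeD2lE // fin_numM // b_fin.
Qed.

End IntegralLemmas.

Section OneStep.
Context {R : realType} {dY : measure_display} {Y : measurableType dY}.
Context {P Q : probability Y R} {x dl : R}.
Hypotheses (x_ge1 : 1 <= x)
  (PQ_le : forall S, measurable S -> (P S <= x%:E * Q S + dl%:E)%E)
  (QP_le : forall S, measurable S -> (Q S <= x%:E * P S + dl%:E)%E).

Definition PQsum := measure_add P Q.
HB.instance Definition _ := Measure.on PQsum.

Let PQsum_fin : fin_num_fun PQsum.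
Proof. by move=> U mU; rewrite /PQsum measure_addE fin_numD !fin_num_measure. Qed.
HB.instance Definition _ := Measure_isFinite.Build _ _ _ PQsum PQsum_fin.

Let P_dom : P `<< PQsum.
Proof.
apply/null_content_dominatesP => A mA; change (PQsum A = 0 -> P A = 0)%E.
by rewrite /PQsum measure_addE => /eqP; rewrite padde_eq0 // => /andP[/eqP].
Qed.

Let Q_dom : Q `<< PQsum.
Proof.
apply/null_content_dominatesP => A mA; change (PQsum A = 0 -> Q A = 0)%E.
by rewrite /PQsum measure_addE => /eqP; rewrite padde_eq0 // => /andP[_ /eqP].
Qed.

Let p y := fine (Radon_Nikodym_SigmaFinite.f P PQsum y).
Let q y := fine (Radon_Nikodym_SigmaFinite.f Q PQsum y).

Let pE y : Radon_Nikodym_SigmaFinite.f P PQsum y = (p y)%:E.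
Proof. by rewrite /p fineK // Radon_Nikodym_SigmaFinite.f_fin_num. Qed.
Let qE y : Radon_Nikodym_SigmaFinite.f Q PQsum y = (q y)%:E.
Proof. by rewrite /q fineK // Radon_Nikodym_SigmaFinite.f_fin_num. Qed.

Let p_ge0 y : 0 <= p y.
Proof. by rewrite -lee_fin -pE Radon_Nikodym_SigmaFinite.f_ge0. Qed.
Let q_ge0 y : 0 <= q y.
Proof. by rewrite -lee_fin -qE Radon_Nikodym_SigmaFinite.f_ge0. Qed.

Let measurable_p : measurable_fun setT p.
Proof.
apply/measurable_EFinP; rewrite (_ : _ \o _ = Radon_Nikodym_SigmaFinite.f P PQsum).
  exact: measurable_int (Radon_Nikodym_SigmaFinite.f_integrable P_dom).
by apply/funext => y /=; rewrite pE.
Qed.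
Let measurable_q : measurable_fun setT q.
Proof.
apply/measurable_EFinP; rewrite (_ : _ \o _ = Radon_Nikodym_SigmaFinite.f Q PQsum).
  exact: measurable_int (Radon_Nikodym_SigmaFinite.f_integrable Q_dom).
by apply/funext => y /=; rewrite qE.
Qed.

Let PE S : measurable S -> P S = (\int[PQsum]_(y in S) (p y)%:E)%E.
Proof.
move=> mS; rewrite (Radon_Nikodym_SigmaFinite.f_integral P_dom) //.
by apply: eq_integral => y _; rewrite pE.
Qed.
Let QE S : measurable S -> Q S = (\int[PQsum]_(y in S) (q y)%:E)%E.
Proof.
move=> mS; rewrite (Radon_Nikodym_SigmaFinite.f_integral Q_dom) //.
by apply: eq_integral => y _; rewrite qE.
Qed.

Let integral_PE (g : Y -> R) : measurable_fun setT g -> (forall y, 0 <= g y) ->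
  (\int[P]_y (g y)%:E = \int[PQsum]_y ((g y * p y)%:E))%E.
Proof.
move=> mg g_ge0; rewrite -(Radon_Nikodym_SigmaFinite.change_of_variables P_dom) //.
- by apply: eq_integral => y _; rewrite EFinM pE.
all: try by move=> y /=; rewrite lee_fin.
all: exact/measurable_EFinP.
Qed.
Let integral_QE (g : Y -> R) : measurable_fun setT g -> (forall y, 0 <= g y) ->
  (\int[Q]_y (g y)%:E = \int[PQsum]_y ((g y * q y)%:E))%E.
Proof.
move=> mg g_ge0; rewrite -(Radon_Nikodym_SigmaFinite.change_of_variables Q_dom) //.
- by apply: eq_integral => y _; rewrite EFinM qE.
all: try by move=> y /=; rewrite lee_fin.
all: exact/measurable_EFinP.
Qed.

Let x_ge0 : 0 <= x. Proof. by move: x_ge1; lra. Qed.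

Let excess_PQ y := Num.max (p y - x * q y) 0.
Let excess_QP y := Num.max (q y - x * p y) 0.

Let excess_PQ_ge0 y : 0 <= excess_PQ y. Proof. by rewrite le_max lexx orbT. Qed.
Let excess_QP_ge0 y : 0 <= excess_QP y. Proof. by rewrite le_max lexx orbT. Qed.

Let measurable_excess_PQ : measurable_fun setT excess_PQ.
Proof. by apply: measurable_maxr => //; apply: measurable_funB => //; exact: measurable_funM. Qed.
Let measurable_excess_QP : measurable_fun setT excess_QP.
Proof. by apply: measurable_maxr => //; apply: measurable_funB => //; exact: measurable_funM. Qed.

Let integral_excess (c c' : R) : 0 <= c -> 0 <= c' ->
  (\int[PQsum]_y ((c * excess_PQ y + c' * excess_QP y)%:E) <= (c * dl + c' * dl)%:E)%E.
Proof.
move=> c_ge0 c'_ge0; rewrite ge0_integral_comb2 // EFinD !EFinM.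
apply: leeD; apply: lee_wpmul2l; rewrite ?lee_fin //; apply: integral_excess_le => //.
- by move=> S mS; rewrite -QE // fin_num_measure.
- by move=> S mS; rewrite -PE // -QE //; exact: PQ_le.
- by move=> S mS; rewrite -PE // fin_num_measure.
- by move=> S mS; rewrite -PE // -QE //; exact: QP_le.
Qed.

Let integral_P_part (a b : R) (g : Y -> R) : 0 <= a -> 0 <= b ->
  measurable_fun setT g -> (forall y, 0 <= g y) ->
  (\int[PQsum]_y ((a * (g y * p y) + b * q y)%:E) = a%:E * \int[P]_y (g y)%:E + b%:E)%E.
Proof.
move=> a_ge0 b_ge0 mg g_ge0; rewrite ge0_integral_comb2 //.
- by rewrite -integral_PE // -QE // probability_setT mule1.
- by move=> y; rewrite mulr_ge0.
- exact: measurable_funM.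
Qed.

Let integral_Q_part (a b : R) (g : Y -> R) : 0 <= a -> 0 <= b ->
  measurable_fun setT g -> (forall y, 0 <= g y) ->
  (\int[PQsum]_y ((a * p y + b * (g y * q y))%:E) = a%:E + b%:E * \int[Q]_y (g y)%:E)%E.
Proof.
move=> a_ge0 b_ge0 mg g_ge0; rewrite ge0_integral_comb2 //.
- by rewrite -integral_QE // -PE // probability_setT mule1.
- by move=> y; rewrite mulr_ge0.
- exact: measurable_funM.
Qed.

Lemma dp_step_integral_le {u v la mu : R} {g0 g1 : Y -> R} :
  0 <= u -> v <= 0 -> la <= u -> mu <= 0 -> 0 <= la ->
  measurable_fun setT g0 -> measurable_fun setT g1 ->
  (forall y, 0 <= g0 y <= 1) -> (forall y, 0 <= g1 y <= 1) ->
  (forall y, x * u * g0 y + v * g1 y <= x * la + mu) ->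
  (forall y, u * g0 y + x * v * g1 y <= la + x * mu) ->
  (u%:E * \int[P]_y (g0 y)%:E + (- mu)%:E <=
    ((u - la) * dl + (- mu) * dl)%:E + (la%:E + (- v)%:E * \int[Q]_y (g1 y)%:E))%E.
Proof.
move=> u_ge0 v_le0 le_la mu_le0 la_ge0 mg0 mg1 g0_01 g1_01 le_C1 le_C2.
have g0_ge0 y : 0 <= g0 y by case/andP: (g0_01 y).
have g1_ge0 y : 0 <= g1 y by case/andP: (g1_01 y).
rewrite -integral_P_part -?integral_Q_part ?oppr_ge0 ?subr_ge0 //.
have u_la_ge0 : 0 <= u - la by rewrite subr_ge0.
have mu_ge0 : 0 <= - mu by rewrite oppr_ge0.
have v_ge0 : 0 <= - v by rewrite oppr_ge0.
pose exc y := (u - la) * excess_PQ y + (- mu) * excess_QP y.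
pose rest y := la * p y + (- v) * (g1 y * q y).
have exc_ge0 y : 0 <= exc y by rewrite addr_ge0 ?mulr_ge0.
have rest_ge0 y : 0 <= rest y by rewrite addr_ge0 ?mulr_ge0.
have mexc : measurable_fun setT exc.
  by apply: measurable_funD; apply: measurable_funM.
have mrest : measurable_fun setT rest.
  by apply: measurable_funD; apply: measurable_funM => //; exact: measurable_funM.
apply: (@le_trans _ _ (\int[PQsum]_y ((exc y)%:E + (rest y)%:E))%E).
  apply: ge0_le_integral => //.
  - move=> y _; rewrite lee_fin addr_ge0 ?mulr_ge0 //; exact: mulr_ge0.
  - apply/measurable_EFinP; apply: measurable_funD; apply: measurable_funM => //.
    exact: measurable_funM.
  - by apply: emeasurable_funD; exact/measurable_EFinP.
  move=> y _; rewrite -EFinD lee_fin /exc /rest.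
  have := dp_step_pointwise x_ge1 u_ge0 v_le0 (p_ge0 y) (q_ge0 y) (g0_01 y) (g1_01 y)
    (le_C1 y) (le_C2 y) erefl erefl le_la mu_le0.
  rewrite /excess_PQ /excess_QP; lra.
rewrite ge0_integralD //; first by apply: leeD2r; exact: integral_excess.
- by move=> y _; rewrite lee_fin.
- exact/measurable_EFinP.
- by move=> y _; rewrite lee_fin.
- exact/measurable_EFinP.
Qed.

End OneStep.

(* a and b are the probabilities of one event under the two values of the
   secret bit. *)
Definition in_comp_region {R : realFieldType} (x dl : R) (m : nat) (a b : R) :=
  [/\ 0 <= a <= 1, 0 <= b <= 1 &
   forall u v, 0 <= u -> v <= 0 ->
     u * a + v * b <= comp_support x dl m u v /\
     u * b + v * a <= comp_support x dl m u v].

Lemma probability_integral_01 {R : realType} {d} {T : measurableType d}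
    (P : probability T R) {g : T -> R} :
  measurable_fun setT g -> (forall y, 0 <= g y <= 1) ->
  (\int[P]_y (g y)%:E)%E = (fine (\int[P]_y (g y)%:E))%:E /\
  0 <= fine (\int[P]_y (g y)%:E) <= 1.
Proof.
move=> mg g_01.
have g_ge0 y : 0 <= g y by case/andP: (g_01 y).
have int_ge0 : (0 <= \int[P]_y (g y)%:E)%E.
  by apply: integral_ge0 => y _; rewrite lee_fin.
have int_le1 : (\int[P]_y (g y)%:E <= 1)%E.
  rewrite -(probability_setT P) -[X in (_ <= X)%E]mul1e -integral_cst //.
  apply: ge0_le_integral => //; first by move=> y _; rewrite lee_fin.
    exact/measurable_EFinP.
  by move=> y _; rewrite lee_fin; case/andP: (g_01 y).
have int_fin : (\int[P]_y (g y)%:E)%E \is a fin_num.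
  by rewrite ge0_fin_numE // (le_lt_trans int_le1) // ltey.
split; first by rewrite fineK.
by rewrite fine_ge0 //= -lee_fin fineK.
Qed.

Lemma in_comp_region_step {R : realType} {dY : measure_display}
    {Y : measurableType dY} {P Q : probability Y R} {x dl : R} {m : nat}
    {g0 g1 : Y -> R} :
  1 <= x -> 0 <= dl -> dl <= 1 ->
  (forall S, measurable S -> (P S <= x%:E * Q S + dl%:E)%E) ->
  (forall S, measurable S -> (Q S <= x%:E * P S + dl%:E)%E) ->
  measurable_fun setT g0 -> measurable_fun setT g1 ->
  (forall y, in_comp_region x dl m (g0 y) (g1 y)) ->
  in_comp_region x dl m.+1 (fine (\int[P]_y (g0 y)%:E)) (fine (\int[Q]_y (g1 y)%:E)).
Proof.
move=> x_ge1 dl_ge0 dl_le1 PQ_le QP_le mg0 mg1 g_in.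
have g0_01 y : 0 <= g0 y <= 1 by case: (g_in y).
have g1_01 y : 0 <= g1 y <= 1 by case: (g_in y).
have [E0 a0_01] := probability_integral_01 P mg0 g0_01.
have [E1 a1_01] := probability_integral_01 Q mg1 g1_01.
set a0 := fine _ in E0 a0_01 *; set a1 := fine _ in E1 a1_01 *.
split => // u v u_ge0 v_le0.
have [la [mu [eC1 eC2 le_la mu_le0 la_ge0]]] :=
  comp_support_decomp x_ge1 dl_ge0 dl_le1 m _ _ u_ge0 v_le0.
have xu_ge0 : 0 <= x * u by rewrite mulr_ge0 //; lra.
have xv_le0 : x * v <= 0 by rewrite mulr_ge0_le0 //; lra.
have -> : comp_support x dl m.+1 u v = dl * u + (1 - dl) * (la + mu).
  rewrite /= -eC1 -eC2; field; rewrite gt_eqF //; lra.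
have g_le_C1 y : x * u * g0 y + v * g1 y <= x * la + mu /\
                x * u * g1 y + v * g0 y <= x * la + mu.
  by rewrite eC1; case: (g_in y) => _ _ /(_ _ _ xu_ge0 v_le0).
have g_le_C2 y : u * g0 y + x * v * g1 y <= la + x * mu /\
                u * g1 y + x * v * g0 y <= la + x * mu.
  by rewrite eC2; case: (g_in y) => _ _ /(_ _ _ u_ge0 xv_le0).
have := dp_step_integral_le x_ge1 PQ_le QP_le u_ge0 v_le0 le_la mu_le0 la_ge0
  mg0 mg1 g0_01 g1_01 (fun y => (g_le_C1 y).1) (fun y => (g_le_C2 y).1).
have := dp_step_integral_le x_ge1 QP_le PQ_le u_ge0 v_le0 le_la mu_le0 la_ge0
  mg1 mg0 g1_01 g0_01 (fun y => (g_le_C1 y).2) (fun y => (g_le_C2 y).2).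
rewrite E0 E1 -!EFinM -!EFinD !lee_fin.
split; lra.
Qed.

Section ProbabilityKernelIntegral.
Context {R : realType} {dX dY : measure_display}.
Context {X : measurableType dX} {Y : measurableType dY}.
Variable l : X -> probability Y R.
Hypothesis measurable_l : forall U, measurable U -> measurable_fun setT (fun x => l x U).

Definition kernel_of_probabilities : X -> {measure set Y -> \bar R} := fun x => l x.

HB.instance Definition _ :=
  isKernel.Build _ _ X Y R kernel_of_probabilities measurable_l.

Let kernel_of_probabilities_uub : measure_fam_uub kernel_of_probabilities.
Proof.
by exists 2 => x; rewrite /kernel_of_probabilities /= probability_setT lte_fin ltr1n.
Qed.

HB.instance Definition _ :=
  Kernel_isFinite.Build _ _ X Y R kernel_of_probabilities kernel_of_probabilities_uub.

Lemma measurable_fun_probabilities_integral (f : X * Y -> \bar R) :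
  (forall z, (0 <= f z)%E) -> measurable_fun setT f ->
  measurable_fun setT (fun x => (\int[l x]_y f (x, y))%E).
Proof. by move=> f_ge0 mf; exact: (measurable_fun_integral_finite_kernel f kernel_of_probabilities). Qed.

End ProbabilityKernelIntegral.

Lemma measurable_rcons_tuple (dO dY : measure_display) (Omega : measurableType dO)
    (Y : measurableType dY) n :
  measurable_fun setT
    (fun z : (Omega * n.-tuple Y) * Y => (z.1.1, [tuple of rcons z.1.2 z.2])).
Proof.
apply: measurable_fun_pair; first exact: measurableT_comp measurable_fst measurable_fst.
apply/measurable_fun_tnthP => i.
have [lt_in|le_ni] := ltnP i n.
  rewrite (_ : _ \o _ = fun z : (Omega * n.-tuple Y) * Y => tnth z.1.2 (Ordinal lt_in)).
    apply: measurableT_comp (measurable_tnth (Ordinal lt_in)) _.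
    exact: measurableT_comp measurable_snd measurable_fst.
  apply: boolp.funext => z /=; rewrite (tnth_nth z.2) /= nth_rcons size_tuple lt_in.
  by rewrite (tnth_nth z.2).
have i_eq_n : nat_of_ord i = n by apply/eqP; rewrite eqn_leq le_ni -ltnS ltn_ord.
rewrite (_ : _ \o _ = fun z : (Omega * n.-tuple Y) * Y => z.2); first exact: measurable_snd.
by apply: boolp.funext => z /=; rewrite (tnth_nth z.2) /= nth_rcons size_tuple i_eq_n ltnn eqxx.
Qed.

Section ViewIntegral.
Context {R : realType} {DB Q : Type} {dY : measure_display} {Y : measurableType dY}.
Context {dO : measure_display} {Omega : measurableType dO}.
Context {nbr : DB -> DB -> Prop} {eps delta : R} {k : nat}.
Context {A : @adversary R DB Q dY Y dO Omega}.
Hypothesis A_valid : valid_adversary nbr eps delta k A.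
Context {f : Omega -> seq Y -> \bar R}.
Hypothesis f_ge0 : forall r ys, (0 <= f r ys)%E.
Hypothesis measurable_f : measurable_fun setT (fun z : Omega * k.-tuple Y => f z.1 z.2).

Lemma view_int_ge0 b m r ys : (0 <= view_int A b m r ys f)%E.
Proof.
elim: m r ys => [|m IH] r ys /=; first exact: f_ge0.
by apply: integral_ge0 => y _; exact: IH.
Qed.

Lemma measurable_view_int b m n : (n + m = k)%N ->
  measurable_fun setT (fun z : Omega * n.-tuple Y => view_int A b m z.1 z.2 f).
Proof.
elim: m n => [|m IH] n; first by rewrite addn0 => nk; subst k.
rewrite -addSnnS => nmk.
have lt_nk : (n < k)%N by rewrite -nmk addSn ltnS leq_addr.
rewrite (_ : (fun z => _) = fun z : Omega * n.-tuple Y =>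
    \int[step_law (A n z.1 z.2) b]_y
      (fun w : (Omega * n.-tuple Y) * Y =>
         view_int A b m w.1.1 [tuple of rcons w.1.2 w.2] f) (z, y))%E; last first.
  by apply: boolp.funext => z /=; rewrite size_tuple.
have measurable_step U : measurable U ->
    measurable_fun setT (fun z : Omega * n.-tuple Y => step_law (A n z.1 z.2) b U).
  by move=> mU; exact: (A_valid n lt_nk).2 b U mU.
have measurable_next : measurable_fun setT (fun w : (Omega * n.-tuple Y) * Y =>
    view_int A b m w.1.1 [tuple of rcons w.1.2 w.2] f).
  exact: measurableT_comp (IH _ nmk) (measurable_rcons_tuple _ _ _ _ n).
exact: measurable_fun_probabilities_integral measurable_step _
  (fun w => view_int_ge0 _ _ _ _) measurable_next.
Qed.

End ViewIntegral.

Section ViewRegion.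
Context {R : realType} {DB Q : Type} {dY : measure_display} {Y : measurableType dY}.
Context {dO : measure_display} {Omega : measurableType dO}.
Context {nbr : DB -> DB -> Prop} {eps delta : R} {k : nat}.
Hypothesis nbr_sym : forall D D' : DB, nbr D D' -> nbr D' D.
Hypotheses (eps_ge0 : 0 <= eps) (delta_ge0 : 0 <= delta) (delta_le1 : delta <= 1).
Context {A : @adversary R DB Q dY Y dO Omega}.
Hypothesis A_valid : valid_adversary nbr eps delta k A.
Context {f : Omega -> seq Y -> \bar R} {g : Omega -> seq Y -> R}.
Hypothesis fE : forall r ys, f r ys = (g r ys)%:E.
Hypothesis g_01 : forall r ys, 0 <= g r ys <= 1.
Hypothesis measurable_f : measurable_fun setT (fun z : Omega * k.-tuple Y => f z.1 z.2).

Let f_ge0 r ys : (0 <= f r ys)%E.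
Proof. by rewrite fE lee_fin; case/andP: (g_01 r ys). Qed.

Let expR_eps_ge1 : 1 <= expR eps.
Proof. by have := expR_ge1Dx eps; move: eps_ge0; lra. Qed.

Lemma step_law_DP {n} r (ys : n.-tuple Y) b S : (n < k)%N -> measurable S ->
  (step_law (A n r ys) b S <= (expR eps)%:E * step_law (A n r ys) (~~ b) S + delta%:E)%E.
Proof.
move=> lt_nk mS; have [nbr01 DP] := (A_valid n lt_nk).1 r ys.
by case: b; apply: DP => //; exact: nbr_sym.
Qed.

Lemma measurable_view_int_next b m {n} r (ys : n.-tuple Y) : (n.+1 + m = k)%N ->
  measurable_fun setT (fun y => fine (view_int A b m r (rcons ys y) f)).
Proof.
move=> nmk.
have mpair : measurable_fun setT (fun y : Y => ((r, ys), y)).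
  by apply: measurable_fun_pair => //; exact: measurable_cst.
have mview := measurable_view_int A_valid f_ge0 measurable_f b m n.+1 nmk.
have mnext := measurableT_comp mview
  (measurableT_comp (measurable_rcons_tuple _ _ Omega Y n) mpair).
exact: measurableT_comp (fine_measurable measurableT) mnext.
Qed.

Lemma view_int_in_region m n (ys : n.-tuple Y) r : (n + m = k)%N ->
  (forall b, view_int A b m r ys f = (fine (view_int A b m r ys f))%:E) /\
  in_comp_region (expR eps) delta m
    (fine (view_int A false m r ys f)) (fine (view_int A true m r ys f)).
Proof.
elim: m n ys => [|m IH] n ys nmk.
  rewrite /= fE /=; split => //; split; rewrite ?g_01 // => u v u_ge0 v_le0.
  have /andP[a_ge0 a_le1] := g_01 r ys.
  by rewrite /=; case: (maxr0_cases (u + v)) => -[-> ?]; split; nra.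
move: nmk; rewrite -addSnnS => nmk.
pose G b y := fine (view_int A b m r (rcons ys y) f).
have IHy y := IH n.+1 [tuple of rcons ys y] nmk.
have G_in y : in_comp_region (expR eps) delta m (G false y) (G true y).
  exact: (IHy y).2.
have viewE b : view_int A b m.+1 r ys f = (\int[step_law (A n r ys) b]_y (G b y)%:E)%E.
  by rewrite /= size_tuple; apply: eq_integral => y _; rewrite /G -((IHy y).1 b).
have lt_nk : (n < k)%N by rewrite -nmk addSn ltnS leq_addr.
have := in_comp_region_step expR_eps_ge1 delta_ge0 delta_le1
  (fun S => step_law_DP r ys false S lt_nk) (fun S => step_law_DP r ys true S lt_nk)
  (measurable_view_int_next false m r ys nmk) (measurable_view_int_next true m r ys nmk) G_in.
rewrite -!viewE => G_in'; split => // b.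
have G_01 y : 0 <= G b y <= 1 by case: (G_in y); case: b.
by rewrite viewE; apply: (probability_integral_01 _ (measurable_view_int_next b m r ys nmk) G_01).1.
Qed.

End ViewRegion.

Section ViewProbability.
Context {R : realType} {DB Q : Type} {dY : measure_display} {Y : measurableType dY}.
Context {dO : measure_display} {Omega : measurableType dO}.
Context {nbr : DB -> DB -> Prop} {eps delta : R} {k : nat}.
Hypothesis nbr_sym : forall D D' : DB, nbr D D' -> nbr D' D.
Hypotheses (eps_ge0 : 0 <= eps) (delta_ge0 : 0 <= delta) (delta_le1 : delta <= 1).
Context {PR : probability Omega R} {A : @adversary R DB Q dY Y dO Omega}.
Hypothesis A_valid : valid_adversary nbr eps delta k A.
Context {S : set (Omega * k.-tuple Y)}.
Hypothesis mS : measurable S.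

Definition view_indicator (r : Omega) (ys : seq Y) : R :=
  if insub ys : option (k.-tuple Y) is Some t then \1_S (r, t) else 0.

Definition view_density b r :=
  fine (view_int A b k r [::] (fun r' ys => (view_indicator r' ys)%:E)).

Let view_indicator_01 r ys : 0 <= view_indicator r ys <= 1.
Proof.
rewrite /view_indicator; case: insub => [t|]; last by rewrite lexx ler01.
by rewrite indicE; case: (_ \in _); rewrite ?lexx ?ler01.
Qed.

Let measurable_view_indicator :
  measurable_fun setT (fun z : Omega * k.-tuple Y => (view_indicator z.1 z.2)%:E).
Proof.
rewrite (_ : (fun z => _) = fun z => (\1_S z : R)%:E).
  by apply/measurable_EFinP; exact: measurable_indic.
by apply: boolp.funext => -[r t]; rewrite /view_indicator /= valK.
Qed.

Let view_int_region r := view_int_in_region nbr_sym eps_ge0 delta_ge0 delta_le1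
  A_valid (fun _ _ => erefl) view_indicator_01 measurable_view_indicator k 0 [tuple] r (add0n k).

Lemma view_prob_density b : view_prob PR A b S = (\int[PR]_r (view_density b r)%:E)%E.
Proof.
apply: eq_integral => r _; rewrite -((view_int_region r).1 b).
by congr view_int; apply: boolp.funext => r'; apply: boolp.funext => ys;
  rewrite /view_indicator; case: insub.
Qed.

Lemma measurable_view_density b : measurable_fun setT (view_density b).
Proof.
have f_ge0 r ys : (0 <= (view_indicator r ys)%:E)%E.
  by rewrite lee_fin; case/andP: (view_indicator_01 r ys).
have mview := measurable_view_int A_valid f_ge0 measurable_view_indicator b k 0 (add0n k).
have mpair : measurable_fun setT (fun r : Omega => (r, [tuple] : 0.-tuple Y)).
  by apply: measurable_fun_pair => //; exact: measurable_cst.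
exact: measurableT_comp (fine_measurable measurableT) (measurableT_comp mview mpair).
Qed.

Lemma view_density_in_region r :
  in_comp_region (expR eps) delta k (view_density false r) (view_density true r).
Proof. exact: (view_int_region r).2. Qed.

End ViewProbability.

Arguments view_density {R DB Q dY Y dO Omega k} A S b r.

Lemma comp_support_delta_i {R : realType} {eps delta : R} {k i : nat} :
  0 <= eps -> 0 <= delta -> delta <= 1 -> (i <= k./2)%N ->
  comp_support (expR eps) delta k 1 (- expR ((k%:R - 2 * i%:R) * eps)) =
  1 - (1 - delta) ^+ k * (1 - delta_i eps k i).
Proof.
move=> eps_ge0 delta_ge0 delta_le1 le_ik.
have le_2ik : (2 * i <= k)%N by rewrite -[k]odd_double_half -mul2n; lia.
set x := expR eps.
have x_ge1 : 1 <= x by have := expR_ge1Dx eps; rewrite /x; lra.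
have -> : expR ((k%:R - 2 * i%:R) * eps) = x ^+ (k - 2 * i).
  by rewrite -expRM_natl natrB // natrM.
have delta_iE : delta_i eps k i = (\sum_(0 <= l < i) 'C(k, l)%:R *
    (x ^+ (k - l) - x ^+ (k - 2 * i + l))) / (1 + x) ^+ k.
  rewrite /delta_i big_mkord; congr (_ / _); apply: eq_bigr => l _.
  have le_lk : (l <= k)%N by have := ltn_ord l; lia.
  by rewrite -!expRM_natl natrB // natrD natrB // natrM.
have pow_neq0 : (1 + x) ^+ k != 0 by rewrite expf_neq0 // gt_eqF //; lra.
apply: (mulIf pow_neq0).
rewrite comp_support_binomial // binomial_hinge_threshold // delta_iE.
by field.
Qed.

Lemma integral_le_affine d (T : measurableType d) (R : realType)
    (PR : probability T R) (F0 F1 : T -> R) (c e : R) : 0 <= c -> 0 <= e ->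
  measurable_fun setT F0 -> measurable_fun setT F1 ->
  (forall r, 0 <= F0 r) -> (forall r, 0 <= F1 r) ->
  (forall r, F0 r <= c * F1 r + e) ->
  (\int[PR]_r (F0 r)%:E <= c%:E * \int[PR]_r (F1 r)%:E + e%:E)%E.
Proof.
move=> c_ge0 e_ge0 mF0 mF1 F0_ge0 F1_ge0 le_F.
have mF1' : measurable_fun setT (fun r => c * F1 r + e * 1).
  by apply: measurable_funD; apply: measurable_funM.
apply: (@le_trans _ _ (\int[PR]_r ((c * F1 r + e * 1)%:E))%E).
  apply: ge0_le_integral => //.
  - by move=> r _; rewrite lee_fin.
  - exact/measurable_EFinP.
  - exact/measurable_EFinP.
  - by move=> r _; rewrite lee_fin mulr1.
rewrite (@ge0_integral_comb2 _ _ _ _ c e F1 (fun=> 1)) //.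
by rewrite integral_cst //= mul1e probability_setT mule1.
Qed.

Theorem theorem6 (R : realType) (DB Q : Type) (nbr : DB -> DB -> Prop)
    (nbr_sym : forall D D' : DB, nbr D D' -> nbr D' D)
    (dY : measure_display) (Y : measurableType dY)
    (eps delta : R) (k : nat)
    (heps : 0 <= eps) (hdelta0 : 0 <= delta) (hdelta1 : delta <= 1)
    (hk : (1 <= k)%N) (i : nat) (hi : (i <= k./2)%N) :
  @DP_under_composition R DB Q dY Y nbr eps delta k
    ((k%:R - 2 * i%:R) * eps)
    (1 - (1 - delta) ^+ k * (1 - delta_i eps k i)).
Proof.
move=> dO Omega PR A A_valid S mS.
have supportE := comp_support_delta_i heps hdelta0 hdelta1 hi.
set T := expR ((k%:R - 2 * i%:R) * eps) in supportE *.
set dlt := 1 - _ in supportE *.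
have T_ge0 : 0 <= T by exact: expR_ge0.
have x_ge1 : 1 <= expR eps by have := expR_ge1Dx eps; lra.
have dlt_ge0 : 0 <= dlt by rewrite -supportE (comp_support_ge0 x_ge1 hdelta0 hdelta1).
have region r := view_density_in_region nbr_sym heps hdelta0 hdelta1 A_valid mS r.
have density_ge0 b r : 0 <= view_density A S b r.
  by case: (region r) => /andP[? _] /andP[? _] _; case: b.
have density_le r : view_density A S false r <= T * view_density A S true r + dlt /\
                    view_density A S true r <= T * view_density A S false r + dlt.
  by case: (region r) => _ _ /(_ 1 (- T) ler01); rewrite oppr_le0 supportE => /(_ T_ge0); lra.
have measurable_density b := measurable_view_density A_valid mS b.
rewrite !(view_prob_density nbr_sym heps hdelta0 hdelta1 A_valid mS).
by split; apply: integral_le_affine => // r; case: (density_le r).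
Qed.
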